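(* Let $n\ge 1$ and let $\|\cdot\|$ be a norm on $\mathbb{R}^n$ that is $C^\infty$ on $\mathbb{R}^n\setminus\{0\}$. Let $G^n$ be the group (under composition, $\mathbf{Y}_{g_1g_2}=\mathbf{Y}_{g_1}\circ\mathbf{Y}_{g_2}$) of all $C^\infty$ diffeomorphisms $\mathbf{Y}:\mathbb{R}^n\setminus\{0\}\to\mathbb{R}^n\setminus\{0\}$ with $\mathbf{Y}(\lambda\mathbf{x})=\lambda\mathbf{Y}(\mathbf{x})$ for all $\mathbf{x}\ne0$ and $\lambda\in\mathbb{R}\setminus\{0\}$. Let $N^n\subset G^n$ consist of the elements with $\mathbf{Y}_g(\mathbf{x})=\mathbf{x}\,r_g(\mathbf{x})$, where $r_g:\mathbb{R}^n\setminus\{0\}\to(0,\infty)$ is $C^\infty$ with $r_g(\lambda\mathbf{x})=r_g(\mathbf{x})$ for all $\lambda\in\mathbb{R}\setminus\{0\}$, and let $H^n\subset G^n$ consist of the elements $h$ with $\|\mathbf{Y}_h(\mathbf{x})\|=\|\mathbf{x}\|$ and $\mathbf{Y}_h(-\mathbf{x})=-\mathbf{Y}_h(\mathbf{x})$ for all $\mathbf{x}\ne0$. Then $G^n$ is the (internal) semidirect product $G^n=N^n\rtimes H^n$ of the abelian normal subgroup $N^n$ and the subgroup $H^n$: that is, $N^n$ is an abelian normal subgroup, $H^n$ is a subgroup, $N^n\cap H^n=\{e\}$ and $G^n=N^nH^n$.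
   Context: $G^n$ is the group of Thermodynamic Coordinate Transformations (homogeneous degree-one diffeomorphisms of $\mathbb{R}^n\setminus\{0\}$); elements are identified with their maps and the group law is composition. *)

From HB Require Import structures.
From mathcomp Require Import all_boot all_order all_algebra.
From mathcomp Require Import all_classical all_reals all_analysis.
Set Implicit Arguments. Unset Strict Implicit. Unset Printing Implicit Defensive.
Import Order.TTheory GRing.Theory Num.Theory.
Import numFieldNormedType.Exports.
Local Open Scope classical_set_scope.
Local Open Scope ring_scope.

Section Defs.
Variable R : realType.

Fixpoint iderive (V W : normedModType R) (vs : seq V) (f : V -> W) : V -> W :=
  match vs with
  | [::] => f
  | v :: vs' => fun x => derive (iderive vs' f) x v
  end.

Definition smooth_on (V W : normedModType R) (U : set V) (f : V -> W) : Prop :=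
  forall (vs : seq V) (x : V), U x ->
    {for x, continuous (iderive vs f)} /\ forall v : V, derivable (iderive vs f) x v.

Variable n : nat.
Notation V := 'rV[R]_n.

Definition punct : set V := [set x | x != 0].

Definition maps_punct (Y : V -> V) : Prop := forall x : V, x != 0 -> Y x != 0.

(* equality of maps on R^n\{0} (elements of G^n are identified with their
   restriction to R^n\{0}) *)
Definition eqP0 (Y Z : V -> V) : Prop := forall x : V, x != 0 -> Y x = Z x.

Definition diffeo0 (Y : V -> V) : Prop :=
  maps_punct Y /\ smooth_on punct Y /\
  exists Z : V -> V, maps_punct Z /\ smooth_on punct Z /\
    eqP0 (Z \o Y) id /\ eqP0 (Y \o Z) id.

Definition homog1 (Y : V -> V) : Prop :=
  forall (x : V) (l : R), x != 0 -> l != 0 -> Y (l *: x) = l *: Y x.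

Definition inG (Y : V -> V) : Prop := diffeo0 Y /\ homog1 Y.

Definition inN (Y : V -> V) : Prop :=
  inG Y /\ exists r : V -> R,
    smooth_on punct r /\
    (forall x : V, x != 0 -> 0 < r x) /\
    (forall (x : V) (l : R), x != 0 -> l != 0 -> r (l *: x) = r x) /\
    (forall x : V, x != 0 -> Y x = r x *: x).

Definition inH (nrm : V -> R) (Y : V -> V) : Prop :=
  inG Y /\ (forall x : V, x != 0 -> nrm (Y x) = nrm x) /\
  (forall x : V, x != 0 -> Y (- x) = - Y x).

Definition is_norm (nrm : V -> R) : Prop :=
  (forall x : V, nrm x = 0 -> x = 0) /\
  (forall (l : R) (x : V), nrm (l *: x) = `|l| * nrm x) /\
  (forall x y : V, nrm (x + y) <= nrm x + nrm y).

Definition subgroupG (P : (V -> V) -> Prop) : Prop :=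
  (forall Y, P Y -> inG Y) /\ P id /\
  (forall Y Z, P Y -> P Z -> P (Y \o Z)) /\
  (forall Y, P Y -> exists Z, P Z /\ eqP0 (Z \o Y) id /\ eqP0 (Y \o Z) id).

End Defs.

From HB Require Import structures.
From mathcomp Require Import all_boot all_order all_algebra.
From mathcomp Require Import all_classical all_reals all_analysis.
From mathcomp Require Import ring lra.
Import Order.TTheory GRing.Theory Num.Theory.
Import numFieldNormedType.Exports.
Local Open Scope classical_set_scope.
Local Open Scope ring_scope.
Set Implicit Arguments. Unset Strict Implicit. Unset Printing Implicit Defensive.

(* A transformation Y in G^n factors as M \o K, where M y = s y *: y with
   s y = nrm y / nrm (Y^-1 y) is radial with a 0-homogeneous factor, and
   K = M^-1 \o Y, i.e. K x = (nrm x / nrm (Y x)) *: Y x, preserves the norm.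
   Radial maps commute, and conjugating one by a degree-one homogeneous Y
   gives the radial map with factor r \o Y^-1; a radial map preserving the
   norm has factor 1.  The analytic content is that these constructions stay
   C^oo on R^n \ {0}: smooth maps are closed under products, inverses and
   composition, the chain rule resting on the fact that continuous partial
   derivatives imply differentiability (mean value theorem along the axes). *)

Section FiniteOrderSmoothness.
Context {R : realType} {n : nat} {W : normedModType R}.
Local Notation V := 'rV[R]_n.

Fixpoint Ck (k : nat) (U : set V) (f : V -> W) : Prop :=
  match k with
  | 0 => forall x, U x -> {for x, continuous f}
  | k.+1 => (forall x, U x -> {for x, continuous f}) /\
            (forall x v, U x -> derivable f x v) /\
            (forall v, Ck k U (fun x => 'D_v f x))
  end.

Lemma Ck_continuous k U (f : V -> W) : Ck k U f -> forall x, U x -> {for x, continuous f}.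
Proof. by case: k => [|k] //= []. Qed.

Lemma iderive_rcons vs v (f : V -> W) :
  iderive (rcons vs v) f = iderive vs (fun x => 'D_v f x).
Proof. by elim: vs => //= w vs ->. Qed.

Lemma smooth_onE U (f : V -> W) : smooth_on U f <-> forall k, Ck k U f.
Proof.
split.
- move=> sf k; elim: k f sf => [|k IH] f sf /=.
    by move=> x Ux; exact: (sf [::] x Ux).1.
  split; first by move=> x Ux; exact: (sf [::] x Ux).1.
  split; first by move=> x v Ux; exact: (sf [::] x Ux).2 v.
  by move=> v; apply: IH => vs x Ux; rewrite -iderive_rcons; exact: sf.
- move=> ck vs; elim/last_ind: vs f ck => [|vs v IH] f ck x Ux.
    by have [c [d _]] := ck 1%N; split; [exact: c | move=> v; exact: d].
  by rewrite iderive_rcons; apply: IH => // k; exact: (ck k.+1).2.2 v.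
Qed.

Lemma near_open (U : set V) x : open U -> U x -> \forall y \near x, U y.
Proof. by move=> oU Ux; apply: open_nbhs_nbhs; split. Qed.

Lemma continuous_near_eq (f g : V -> W) x : (\forall y \near x, f y = g y) ->
  {for x, continuous f} -> {for x, continuous g}.
Proof.
move=> fg cf; rewrite /prop_for /continuous_at.
have <- : f x = g x by exact: (nbhs_singleton fg).
by apply: cvg_trans cf; exact: (near_eq_cvg fg).
Qed.

Lemma Ck_eq_on k U (f g : V -> W) : open U -> (forall x, U x -> f x = g x) ->
  Ck k U f -> Ck k U g.
Proof.
move=> oU; elim: k f g => [|k IH] f g fg /=.
  move=> cf x Ux; apply: (continuous_near_eq _ (cf x Ux)).
  by apply: filterS (near_open oU Ux) => y Uy; rewrite fg.
move=> [cf [df Df]]; split.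
  move=> x Ux; apply: (continuous_near_eq _ (cf x Ux)).
  by apply: filterS (near_open oU Ux) => y Uy; rewrite fg.
split.
  move=> x v Ux; apply: (near_eq_derivable _ (df x v Ux)).
  by apply: filterS (near_open oU Ux) => y Uy; rewrite fg.
move=> v; apply: IH (Df v) => x Ux; apply: near_eq_derive.
by apply: filterS (near_open oU Ux) => y Uy; rewrite fg.
Qed.

Lemma CkS k U (f : V -> W) : Ck k.+1 U f -> Ck k U f.
Proof.
elim: k f => [|k IH] f /=; first by case.
by move=> [c [d D]]; split => //; split => // v; apply: IH; exact: D.
Qed.

Lemma Ck_leq k m U (f : V -> W) : (m <= k)%N -> Ck k U f -> Ck m U f.
Proof.
move=> /subnK <-; elim: (k - m)%N => // j IH.
by rewrite addSn => /CkS.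
Qed.

Lemma Ck_cst k U (w : W) : Ck k U (fun _ => w).
Proof.
elim: k w => [|k IH] w /=; first by move=> x _; exact: cst_continuous.
split; first by move=> x _; exact: cst_continuous.
split; first by move=> x v _; exact: derivable_cst.
move=> v; have -> : (fun x => 'D_v (fun _ : V => w) x) = fun _ => 0.
  by apply/funext => x; exact: derive_cst.
exact: IH.
Qed.

Lemma CkD k U (f g : V -> W) : open U -> Ck k U f -> Ck k U g ->
  Ck k U (fun x => f x + g x).
Proof.
move=> oU; elim: k f g => [|k IH] f g /=.
  by move=> cf cg x Ux; apply: continuousD; [exact: cf | exact: cg].
move=> [cf [df Df]] [cg [dg Dg]]; split.
  by move=> x Ux; apply: continuousD; [exact: cf | exact: cg].
split; first by move=> x v Ux; exact: derivableD (df x v Ux) (dg x v Ux).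
move=> v; apply: (Ck_eq_on (f := fun x => 'D_v f x + 'D_v g x)) => //.
  by move=> x Ux; rewrite (deriveD (df x v Ux) (dg x v Ux)).
exact: IH.
Qed.

Lemma Ck_sum k U (I : Type) (s : seq I) (F : I -> V -> W) : open U ->
  (forall i, Ck k U (F i)) -> Ck k U (fun x => \sum_(i <- s) F i x).
Proof.
move=> oU cF; elim: s => [|i s IH].
  under eq_fun do rewrite big_nil; exact: Ck_cst.
under eq_fun do rewrite big_cons; exact: CkD.
Qed.

Lemma der_scalef (c : V -> R) (f : V -> W) x v :
  derivable c x v -> derivable f x v ->
  (fun h => h^-1 *: (((fun y => c y *: f y) \o shift x) (h *: v) - c x *: f x)) @
  0^' --> 'D_v c x *: f x + c x *: 'D_v f x.
Proof.
move=> dc df.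
rewrite [X in X @ _](_ : _ = fun h => (h^-1 * (c (h *: v + x) - c x)) *: f (h *: v + x)
   + c x *: (h^-1 *: (f (h *: v + x) - f x))); last first.
  rewrite funeqE => h /=.
  have -> : c (h *: v + x) *: f (h *: v + x) - c x *: f x =
    (c (h *: v + x) - c x) *: f (h *: v + x) + c x *: (f (h *: v + x) - f x).
    by rewrite scalerBl scalerBr addrA subrK.
  by rewrite scalerDr scalerA; congr (_ + _); rewrite !scalerA mulrC.
apply: cvgD; last exact: cvgZl_tmp df.
apply: cvg_comp2 (@scale_continuous _ _ (_, _)) => /=; first exact: dc.
suff : {for 0, continuous (fun h : R => f (h *: v + x))}.
  by move=> /continuous_withinNx; rewrite scale0r add0r.
exact/differentiable_continuous/derivable1_diffP/(derivable1P _ _ _).1.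
Qed.

Lemma deriveZf (c : V -> R) (f : V -> W) x v :
  derivable c x v -> derivable f x v ->
  'D_v (fun y => c y *: f y) x = 'D_v c x *: f x + c x *: 'D_v f x.
Proof. by move=> dc df; apply: cvg_lim (der_scalef dc df). Qed.

Lemma derivableZf (c : V -> R) (f : V -> W) x v :
  derivable c x v -> derivable f x v -> derivable (fun y => c y *: f y) x v.
Proof.
move=> dc df; apply/cvg_ex; exists ('D_v c x *: f x + c x *: 'D_v f x).
exact: der_scalef.
Qed.

End FiniteOrderSmoothness.

Section SmoothnessAlgebra.
Context {R : realType} {n : nat}.
Local Notation V := 'rV[R]_n.

Lemma CkZ {W : normedModType R} k U (c : V -> R) (f : V -> W) : open U ->
  Ck k U c -> Ck k U f -> Ck k U (fun x => c x *: f x).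
Proof.
move=> oU; elim: k c f => [|k IH] c f /=.
  by move=> cc cf x Ux; apply: continuousZ; [exact: cc | exact: cf].
move=> [cc [dc Dc]] [cf [df Df]]; split.
  by move=> x Ux; apply: continuousZ; [exact: cc | exact: cf].
split; first by move=> x v Ux; exact: derivableZf (dc x v Ux) (df x v Ux).
move=> v; apply: (Ck_eq_on (f := fun x => 'D_v c x *: f x + c x *: 'D_v f x)) => //.
  by move=> x Ux; rewrite (deriveZf (dc x v Ux) (df x v Ux)).
by apply: CkD => //; apply: IH => //; apply: CkS; split.
Qed.

Lemma Ck_coord m k U (g : V -> 'rV[R]_m) (j : 'I_m) : open U -> Ck k U g ->
  Ck k U (fun x => g x 0 j).
Proof.
have coord_cont : continuous (fun M : 'rV[R]_m => M 0 j).
  by move=> M; exact: differentiable_continuous (differentiable_coord _ _ _).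
move=> oU; elim: k g => [|k IH] g /=.
  by move=> cg x Ux; exact: continuous_comp (cg x Ux) (coord_cont _).
move=> [cg [dg Dg]]; split.
  by move=> x Ux; exact: continuous_comp (cg x Ux) (coord_cont _).
split; first by move=> x v Ux; exact: (derivable_mxP _ _ _).1 (dg x v Ux) 0 j.
move=> v; apply: (Ck_eq_on (f := fun x => 'D_v g x 0 j)) => //; last exact: IH.
by move=> x Ux; rewrite (derive_mx (dg x v Ux)) mxE.
Qed.

Lemma CkV k U (r : V -> R) : open U -> (forall x, U x -> r x != 0) ->
  Ck k U r -> Ck k U (fun x => (r x)^-1).
Proof.
move=> oU r0; elim: k r r0 => [|k IH] r r0 /=.
  by move=> cr x Ux; apply: continuousV; [exact: r0 | exact: cr].
move=> [cr [dr Dr]]; split.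
  by move=> x Ux; apply: continuousV; [exact: r0 | exact: cr].
split; first by move=> x v Ux; apply: derivableV; [exact: r0 | exact: dr].
move=> v.
apply: (Ck_eq_on (f := fun x => (-1 : R) *: ((r x)^-1 *: (r x)^-1) *: 'D_v r x)) => //.
  move=> x Ux; rewrite (deriveV (r0 x Ux) (dr x v Ux)) scaleN1r.
  by rewrite expr2 invfM.
have cr' : Ck k U (fun x => (r x)^-1) by apply: IH => //; apply: CkS; split.
by apply: CkZ => //; apply: CkZ => //; [exact: Ck_cst | exact: CkZ].
Qed.

Lemma Ck_id k U : Ck k U (fun x : V => x).
Proof.
case: k => [|k] /=; first by move=> x _; exact: cvg_id.
split; first by move=> x _; exact: cvg_id.
split; first by move=> x v _; exact: derivable_id.
move=> v; have -> : (fun x : V => 'D_v (fun x : V => x) x) = fun _ => v.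
  by apply/funext => x; exact: derive_id.
exact: Ck_cst.
Qed.

End SmoothnessAlgebra.

Section DifferentiabilityCriterion.
Context {R : realType} {n : nat}.
Local Notation V := 'rV[R]_n.

Lemma differentiable_linear_approx {W : normedModType R} (f : V -> W) x
    (L : {linear V -> W}) : continuous L ->
  (forall e : R, 0 < e -> \forall y \near x, `|f y - f x - L (y - x)| <= e * `|y - x|) ->
  differentiable f x.
Proof.
move=> cL hL; apply/diffP.
set P := fun df : {linear V -> W} => continuous df /\ forall y,
  f y = f (lim (nbhs x)) + df (y - lim (nbhs x)) +o_(y \near x) (y - lim (nbhs x)).
suff : P (get P) by [].
apply: getPex; exists L; split => //; rewrite lim_id // => y.
rewrite littleoE; first by rewrite /= addrC subrK.
move=> e e0; apply: filterS (hL e e0) => z.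
by rewrite /= opprD addrA.
Qed.

Lemma mx_norm_entry (M : V) i : `|M 0 i| <= `|M|.
Proof.
rewrite [`|M|]mx_normrE.
exact: (le_bigmax _ (fun ij : 'I_1 * 'I_n => `|M ij.1 ij.2|) (0, i)).
Qed.

Lemma mx_norm_le_entries (M : V) c : 0 <= c -> (forall i, `|M 0 i| <= c) -> `|M| <= c.
Proof.
move=> c0 hM; rewrite [`|M|]mx_normrE; apply: bigmax_le => // -[i j] _ /=.
by rewrite (ord1 i); exact: hM.
Qed.

Lemma MVT_affine_bound (g dg : R -> R) (a b c eps : R) : a <= b ->
  (forall t : R, a <= t <= b -> is_derive t 1 g (dg t)) ->
  (forall t : R, a <= t <= b -> `|dg t - c| <= eps) ->
  `|g b - g a - c * (b - a)| <= eps * (b - a).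
Proof.
move=> ab hd hb.
have [t tab ->] : exists2 t, t \in `[a, b] & g b - g a = dg t * (b - a).
  apply: MVT_segment => //.
    by move=> t; rewrite in_itv /= => /andP[h1 h2]; apply: hd; rewrite !ltW.
  apply: continuous_in_subspaceT => t; rewrite inE /= in_itv /= => tab.
  apply: differentiable_continuous; apply/derivable1_diffP.
  by have [] := hd t tab.
rewrite -mulrBl normrM (ger0_norm (x := b - a)) ?subr_ge0 //.
apply: ler_wpM2r; first by rewrite subr_ge0.
by apply: hb; move: tab; rewrite in_itv.
Qed.

Lemma is_derive_line {W : normedModType R} (f : V -> W) a v t :
  derivable f (t *: v + a) v ->
  is_derive t 1 (fun s => f (s *: v + a)) ('D_v f (t *: v + a)).
Proof.
have E : (fun h : R => h^-1 *: (((fun s => f (s *: v + a)) \o shift t) (h *: 1)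
                                - f (t *: v + a)))
  = (fun h => h^-1 *: ((f \o shift (t *: v + a)) (h *: v) - f (t *: v + a))).
  apply/funext => h /=; congr (_ *: (f _ - _)).
  by rewrite -[h%:A]/(h * 1) mulr1 scalerDl addrA.
by move=> df; split; [rewrite /derivable E | rewrite /derive E].
Qed.

Local Notation e_ i := (delta_mx 0 i : V).

Lemma partial_increment_bound (f : V -> R) (P : set V) i (a : V) (s c eps : R) :
  (forall t : R, `|t| <= `|s| -> P (t *: e_ i + a)) ->
  (forall y, P y -> derivable f y (e_ i) /\ `|'D_(e_ i) f y - c| <= eps) ->
  `|f (s *: e_ i + a) - f a - s * c| <= eps * `|s|.
Proof.
move=> hP hD; pose g t := f (t *: e_ i + a); pose dg t := 'D_(e_ i) f (t *: e_ i + a).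
have hd (t : R) : `|t| <= `|s| -> is_derive t 1 g (dg t).
  by move=> ts; apply: is_derive_line; exact: (hD _ (hP t ts)).1.
have hb (t : R) : `|t| <= `|s| -> `|dg t - c| <= eps.
  by move=> ts; exact: (hD _ (hP t ts)).2.
have g0 : g 0 = f a by rewrite /g scale0r add0r.
case: (leP 0 s) => s0.
- have tsP t : 0 <= t <= s -> `|t| <= `|s|.
    by move=> /andP[t0 ts]; rewrite !ger0_norm // (le_trans t0 ts).
  have := MVT_affine_bound s0 (fun t h => hd t (tsP t h)) (fun t h => hb t (tsP t h)).
  by rewrite g0 subr0 (ger0_norm s0) mulrC.
- have tsP t : s <= t <= 0 -> `|t| <= `|s|.
    by move=> /andP[st t0]; rewrite !ler0_norm ?(ltW s0) // lerN2.
  have := MVT_affine_bound (ltW s0) (fun t h => hd t (tsP t h)) (fun t h => hb t (tsP t h)).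
  rewrite g0 sub0r (ltr0_norm s0) -normrN.
  suff -> : f (s *: e_ i + a) - f a - s * c = - (f a - g s - c * - s) by [].
  by rewrite /g; ring.
Qed.

Definition axis_path (x h : V) (k : nat) : V :=
  x + \row_j (if (j < k)%N then h 0 j else 0).

Lemma axis_path0 (x h : V) : axis_path x h 0 = x.
Proof. by apply/rowP => j; rewrite /axis_path !mxE /= addr0. Qed.

Lemma axis_path_end (x h : V) : axis_path x h n = x + h.
Proof. by apply/rowP => j; rewrite /axis_path !mxE ltn_ord. Qed.

Lemma axis_pathS (x h : V) (i : 'I_n) :
  axis_path x h i.+1 = h 0 i *: e_ i + axis_path x h i.
Proof.
apply/rowP => j; rewrite /axis_path !mxE eqxx /= ltnS.
case: (ltngtP j i) => [ji|ij|/val_inj ->]; last by rewrite eqxx mulr1 !addr0 addrC.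
- by rewrite -val_eqE (ltn_eqF ji) mulr0 add0r.
- by rewrite -val_eqE (gtn_eqF ij) mulr0 add0r.
Qed.

Lemma axis_path_near (x h : V) (i : 'I_n) (t : R) : `|t| <= `|h 0 i| ->
  `|x - (t *: e_ i + axis_path x h i)| <= `|h|.
Proof.
move=> th; rewrite -normrN opprB; apply: mx_norm_le_entries => // j.
rewrite /axis_path !mxE eqxx /= addrCA addrC addKr.
case: (ltngtP j i) => [ji|ij|/val_inj ->].
- by rewrite -val_eqE (ltn_eqF ji) mulr0 add0r mx_norm_entry.
- by rewrite -val_eqE (gtn_eqF ij) mulr0 add0r normr0.
- by rewrite eqxx mulr1 addr0; exact: le_trans th (mx_norm_entry _ _).
Qed.

End DifferentiabilityCriterion.

Definition row_pairing {R : realType} {n : nat} (p : 'I_n -> R) (h : 'rV[R]_n) : R :=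
  \sum_i h 0 i * p i.

Lemma row_pairing_is_linear {R : realType} {n : nat} (p : 'I_n -> R) :
  linear (row_pairing p).
Proof.
move=> a u v; rewrite /row_pairing /GRing.scale /= mulr_sumr -big_split /=.
by apply: eq_bigr => i _; rewrite !mxE mulrDl mulrA.
Qed.

HB.instance Definition _ (R : realType) (n : nat) (p : 'I_n -> R) :=
  GRing.isLinear.Build R 'rV[R]_n R *:%R (row_pairing p) (row_pairing_is_linear p).

Section C1Differentiable.
Context {R : realType} {n : nat}.
Local Notation V := 'rV[R]_n.
Local Notation e_ i := (delta_mx 0 i : V).

Lemma row_pairing_continuous (p : 'I_n -> R) : continuous (row_pairing p : V -> R).
Proof.
have : Ck 0 setT (fun h : V => \sum_(i <- index_enum 'I_n) (h 0 i *: p i)).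
  apply: Ck_sum => [|i]; first exact: openT.
  apply: CkZ; [exact: openT | | exact: Ck_cst].
  by apply: (Ck_coord (g := id)); [exact: openT | exact: Ck_id].
by move=> C h; exact: C h I.
Qed.

(* Telescope along [axis_path x (y - x)]: each leg moves a single coordinate,
   so by the mean value theorem its increment is [h_i * D_i f x] up to
   [eps * |h|], and [n * eps < e]. *)
Lemma C1_differentiable (f : V -> R) U x : open U -> Ck 1 U f -> U x ->
  differentiable f x.
Proof.
move=> oU [cf [df cD]] Ux.
pose p i := 'D_(e_ i) f x.
apply: (differentiable_linear_approx (L := row_pairing p)).
  exact: row_pairing_continuous.
move=> e e0.
pose eps := e / n.+1%:R.
have eps0 : 0 < eps by rewrite divr_gt0 ?ltr0n.
have near_partials : \forall y \near x, forall i, `|'D_(e_ i) f y - p i| <= eps.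
  apply: (@filter_forall V _ (fun i (y : V) => `|'D_(e_ i) f y - p i| <= eps) (nbhs x) _) => i.
  move/cvgrPdist_le: (cD (e_ i) x Ux) => /(_ eps eps0).
  by apply: filterS => y; rewrite distrC.
have {near_partials} : \forall y \near x, U y /\ forall i, `|'D_(e_ i) f y - p i| <= eps.
  by apply: filterS2 (near_open oU Ux) near_partials => y.
move/nbhs_ballP => [d d0 Hd].
apply/nbhs_ballP; exists d => // y bxy.
have hd : `|y - x| < d by move: bxy; rewrite -ball_normE /= distrC.
set h := y - x.
have -> : f y - f x - row_pairing p h =
    \sum_(i < n) (f (axis_path x h i.+1) - f (axis_path x h i) - h 0 i * p i).
  rewrite sumrB -(big_mkord xpredT (fun i => f (axis_path x h i.+1) - f (axis_path x h i))).
  by rewrite telescope_sumr // axis_path_end axis_path0 /h [x + _]addrC subrK.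
apply: le_trans (ler_norm_sum _ _ _) _.
apply: (@le_trans _ _ (\sum_(i < n) eps * `|h|)).
  apply: ler_sum => i _; rewrite axis_pathS.
  apply: le_trans (partial_increment_bound (P := ball x d) _ _) _.
  - move=> t th; rewrite -ball_normE /=.
    exact: le_lt_trans (axis_path_near x th) hd.
  - by move=> z bz; have [Uz Bz] := Hd z bz; split; [exact: df | exact: Bz].
  - by apply: ler_wpM2l; [exact: ltW | exact: mx_norm_entry].
rewrite sumr_const card_ord -mulr_natr.
rewrite [X in X <= _](_ : _ = e * `|h| * (n%:R / n.+1%:R)); last first.
  by rewrite /eps; field; rewrite addrC natr1 pnatr_eq0.
apply: ler_piMr; first by rewrite mulr_ge0 // ltW.
by rewrite ler_pdivrMr ?ltr0n // mul1r ler_nat.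
Qed.

Lemma C1_differentiable_row m (f : V -> 'rV[R]_m) U x : open U -> Ck 1 U f -> U x ->
  differentiable f x.
Proof.
move=> oU cf Ux.
have -> : f = \sum_(j < m) (fun y => f y 0 j *: (delta_mx 0 j : 'rV[R]_m)).
  apply/funext => y; rewrite fct_sumE {1}[f y]matrix_sum_delta big_ord1.
  by apply: eq_bigr => j _; rewrite (_ : 0 = ord0) // ?ord1.
apply: differentiable_sum => j; apply: differentiableZl.
by apply: (C1_differentiable oU _ Ux); exact: Ck_coord.
Qed.

End C1Differentiable.

Section SmoothComposition.
Context {R : realType} {n : nat}.
Local Notation V := 'rV[R]_n.
Local Notation e_ i := (delta_mx 0 i : V).

Definition C1_differentiable_into (W : normedModType R) : Prop :=
  forall (U : set V) (f : V -> W) x, open U -> Ck 1 U f -> U x -> differentiable f x.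

Lemma row_sum_delta (w : V) : w = \sum_(i <- index_enum 'I_n) (w 0 i *: e_ i).
Proof.
rewrite {1}[w]matrix_sum_delta big_ord1.
by apply: eq_bigr => j _; rewrite (_ : 0 = ord0) // ?ord1.
Qed.

(* chain rule: [D_v (f \o g) = \sum_i (D_v g)_i * (D_(e_ i) f \o g)] *)
Lemma Ck_comp {W : normedModType R} k (U U' : set V) (f : V -> W) (g : V -> V) :
  C1_differentiable_into W -> open U -> open U' ->
  (forall x, U x -> U' (g x)) -> Ck k U' f -> Ck k U g -> Ck k U (f \o g).
Proof.
move=> C1W oU oU' gU; elim: k f g gU => [|k IH] f g gU.
  move=> cf cg x Ux; apply: continuous_comp; [exact: cg | exact: cf (g x) (gU x Ux)].
move=> cf cg.
have dg y : U y -> differentiable g y.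
  by move=> Uy; exact: C1_differentiable_row oU (Ck_leq (isT : (1 <= k.+1)%N) cg) Uy.
have df y : U y -> differentiable f (g y).
  by move=> Uy; exact: C1W _ _ _ oU' (Ck_leq (isT : (1 <= k.+1)%N) cf) (gU y Uy).
have dfg y : U y -> differentiable (f \o g) y.
  by move=> Uy; apply: differentiable_comp; [exact: dg | exact: df].
split.
  move=> x Ux; apply: continuous_comp; first exact: (Ck_continuous cg).
  exact: (Ck_continuous cf) (g x) (gU x Ux).
split; first by move=> x v Ux; apply: diff_derivable; exact: dfg.
move=> v.
apply: (Ck_eq_on (f := fun y => \sum_(i <- index_enum 'I_n) ('D_v g y 0 i *: 'D_(e_ i) f (g y)))) => //.
  move=> y Uy.
  rewrite (deriveE _ (dfg y Uy)) (diff_comp (dg y Uy) (df y Uy)) /= -(deriveE _ (dg y Uy)).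
  rewrite [in RHS](row_sum_delta ('D_v g y)) linear_sum; apply: eq_bigr => i _.
  by rewrite linearZ /= (deriveE _ (df y Uy)).
apply: Ck_sum => // i; apply: CkZ => //; first by apply: Ck_coord => //; exact: cg.2.2 v.
by apply: (IH (fun z => 'D_(e_ i) f z)) => //; [exact: cf.2.2 | exact: CkS].
Qed.

Lemma smooth_on_eq {W : normedModType R} U (f g : V -> W) : open U ->
  (forall x, U x -> f x = g x) -> smooth_on U f -> smooth_on U g.
Proof. by move=> oU fg /smooth_onE cf; apply/smooth_onE => k; exact: Ck_eq_on (cf k). Qed.

Lemma smooth_cst {W : normedModType R} U (w : W) : smooth_on U (fun _ : V => w).
Proof. by apply/smooth_onE => k; exact: Ck_cst. Qed.

Lemma smooth_id U : smooth_on U (fun x : V => x).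
Proof. by apply/smooth_onE => k; exact: Ck_id. Qed.

Lemma smoothZ {W : normedModType R} U (c : V -> R) (f : V -> W) : open U ->
  smooth_on U c -> smooth_on U f -> smooth_on U (fun x => c x *: f x).
Proof. by move=> oU /smooth_onE cc /smooth_onE cf; apply/smooth_onE => k; exact: CkZ. Qed.

Lemma smoothV U (r : V -> R) : open U -> (forall x, U x -> r x != 0) ->
  smooth_on U r -> smooth_on U (fun x => (r x)^-1).
Proof. by move=> oU r0 /smooth_onE cr; apply/smooth_onE => k; exact: CkV. Qed.

Lemma smooth_comp {W : normedModType R} U U' (f : V -> W) (g : V -> V) :
  C1_differentiable_into W -> open U -> open U' ->
  (forall x, U x -> U' (g x)) -> smooth_on U' f -> smooth_on U g ->
  smooth_on U (f \o g).
Proof.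
move=> C1W oU oU' gU /smooth_onE cf /smooth_onE cg; apply/smooth_onE => k.
exact: Ck_comp C1W oU oU' gU (cf k) (cg k).
Qed.

Lemma C1_differentiable_into_real : C1_differentiable_into R.
Proof. by move=> U f x; exact: C1_differentiable. Qed.

Lemma C1_differentiable_into_row : C1_differentiable_into V.
Proof. by move=> U f x; exact: C1_differentiable_row. Qed.

Lemma open_punct : open (@punct R n).
Proof.
have -> : @punct R n = ~` [set (0 : V)].
  by apply/seteqP; split => x /=; rewrite /punct /= => /eqP.
apply: closed_openC; apply: accessible_closed_set1.
exact: hausdorff_accessible (@norm_hausdorff _ V).
Qed.

End SmoothComposition.

Section CoordinateTransformations.
Context {R : realType} {n : nat}.
Local Notation V := 'rV[R]_n.

Lemma scale_neq0 (l : R) (x : V) : l != 0 -> x != 0 -> l *: x != 0.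
Proof. by move=> l0 x0; rewrite scaler_eq0 negb_or l0 x0. Qed.

Lemma homog1N (Y : V -> V) x : homog1 Y -> x != 0 -> Y (- x) = - Y x.
Proof. by move=> hY x0; rewrite -scaleN1r hY ?scaleN1r ?oppr_eq0 ?oner_eq0. Qed.

Lemma inG_eqP0 (Y Y' : V -> V) : eqP0 Y Y' -> inG Y' -> inG Y.
Proof.
move=> e [[mY [sY [Z [mZ [sZ [e1 e2]]]]]] hY].
split; [split; [|split]|].
- by move=> x x0; rewrite e // mY.
- by apply: (smooth_on_eq open_punct _ sY) => x x0; rewrite e.
- exists Z; split => //; split => //; split.
  + by move=> x x0 /=; rewrite e //; exact: e1.
  + by move=> x x0 /=; rewrite e; [exact: e2 | exact: mZ].
- by move=> x l x0 l0; rewrite !e ?hY // scale_neq0.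
Qed.

Lemma inN_eqP0 (Y Y' : V -> V) : eqP0 Y Y' -> inN Y' -> inN Y.
Proof.
move=> e [gY [r [sr [rp [rh rY]]]]]; split; first exact: inG_eqP0 gY.
by exists r; do 3!split => //; move=> x x0; rewrite e // rY.
Qed.

Lemma inG_comp (Y Z : V -> V) : inG Y -> inG Z -> inG (Y \o Z).
Proof.
move=> [[mY [sY [Yi [mYi [sYi [eY1 eY2]]]]]] hY].
move=> [[mZ [sZ [Zi [mZi [sZi [eZ1 eZ2]]]]]] hZ].
have C1V := @C1_differentiable_into_row R n.
split; [split; [|split]|].
- by move=> x x0 /=; apply: mY; apply: mZ.
- exact: smooth_comp C1V open_punct open_punct mZ sY sZ.
- exists (Zi \o Yi); split; first by move=> x x0 /=; apply: mZi; apply: mYi.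
  split; first exact: smooth_comp C1V open_punct open_punct mYi sZi sYi.
  split.
  + by move=> x x0 /=; have /= -> := eY1 (Z x) (mZ x x0); exact: eZ1.
  + by move=> x x0 /=; have /= -> := eZ2 (Yi x) (mYi x x0); exact: eY2.
- by move=> x l x0 l0 /=; rewrite hZ // hY // mZ.
Qed.

Lemma inG_inv (Y : V -> V) : inG Y ->
  exists Yi, inG Yi /\ eqP0 (Yi \o Y) id /\ eqP0 (Y \o Yi) id.
Proof.
move=> [[mY [sY [Yi [mYi [sYi [e1 e2]]]]]] hY].
exists Yi; split; last by split.
split; first by split; [exact: mYi | split => //; exists Y].
move=> x l x0 l0.
have E : Y (l *: Yi x) = l *: x by rewrite hY ?mYi //; have /= -> := e2 x x0.
by have := e1 (l *: Yi x) (scale_neq0 l0 (mYi x x0)); rewrite /= E.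
Qed.

Lemma eqP0_inverse (G Gi Z : V -> V) : maps_punct Z -> eqP0 (G \o Z) id ->
  eqP0 (Gi \o G) id -> eqP0 Gi Z.
Proof. by move=> mZ e1 e2 x x0; have := e2 (Z x) (mZ x x0); have /= -> := e1 x x0. Qed.

Lemma inN_radial (s : V -> R) : smooth_on (@punct R n) s -> (forall x, x != 0 -> 0 < s x) ->
  (forall x l, x != 0 -> l != 0 -> s (l *: x) = s x) ->
  inN (fun x => s x *: x).
Proof.
move=> ss sp sh.
have s0 x : x != 0 -> s x != 0 by move=> x0; rewrite gt_eqF ?sp.
split; last by exists s; split => //; split => //; split.
split; last by move=> x l x0 l0 /=; rewrite sh // scalerA mulrC -scalerA.
split; first by move=> x x0; rewrite scale_neq0 ?s0.
split; first by apply: (smoothZ open_punct ss); exact: smooth_id.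
exists (fun x => (s x)^-1 *: x); split.
  by move=> x x0; rewrite scale_neq0 ?invr_eq0 ?s0.
split.
  apply: (smoothZ open_punct); last exact: smooth_id.
  by apply: (smoothV open_punct) => // x x0; exact: s0.
split => x x0 /=.
- by rewrite sh ?s0 // scalerA mulVf ?s0 // scale1r.
- by rewrite sh ?invr_eq0 ?s0 // scalerA mulfV ?s0 // scale1r.
Qed.

Lemma comp_radial (Y Z : V -> V) (rY rZ : V -> R) :
  (forall x, x != 0 -> 0 < rZ x) ->
  (forall x l, x != 0 -> l != 0 -> rY (l *: x) = rY x) ->
  (forall x, x != 0 -> Y x = rY x *: x) ->
  (forall x, x != 0 -> Z x = rZ x *: x) ->
  eqP0 (Y \o Z) (fun x => (rY x * rZ x) *: x).
Proof.
move=> pZ hY eY eZ x x0 /=.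
have z0 : rZ x != 0 by rewrite gt_eqF ?pZ.
by rewrite eZ // eY ?scale_neq0 // hY // scalerA.
Qed.

Lemma subgroup_N : subgroupG (@inN R n).
Proof.
split; first by move=> Y [].
split.
  apply: (inN_eqP0 (Y' := fun x => (fun _ => 1 : R) x *: x)).
    by move=> x x0; rewrite scale1r.
  by apply: inN_radial; [exact: smooth_cst | move=> *; exact: ltr01 | by []].
split.
  move=> Y Z [gY [rY [sY [pY [hY eY]]]]] [gZ [rZ [sZ [pZ [hZ eZ]]]]].
  apply: inN_eqP0 (comp_radial pZ hY eY eZ) _.
  apply: inN_radial.
  - exact: smoothZ open_punct sY sZ.
  - by move=> x x0; rewrite mulr_gt0 ?pY ?pZ.
  - by move=> x l x0 l0; rewrite hY ?hZ.
move=> Y [gY [r [sr [pr [hr eY]]]]].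
have r0 x : x != 0 -> r x != 0 by move=> x0; rewrite gt_eqF ?pr.
exists (fun x => (r x)^-1 *: x); split.
  apply: inN_radial.
  - by apply: (smoothV open_punct) => // x x0; exact: r0.
  - by move=> x x0; rewrite invr_gt0 pr.
  - by move=> x l x0 l0; rewrite hr.
split => x x0 /=.
- by rewrite eY // hr ?r0 // scalerA mulVf ?r0 // scale1r.
- by rewrite eY ?scale_neq0 ?invr_eq0 ?r0 // hr ?invr_eq0 ?r0 // scalerA mulfV ?r0 // scale1r.
Qed.

Lemma N_commute (Y Z : V -> V) : inN Y -> inN Z -> eqP0 (Y \o Z) (Z \o Y).
Proof.
move=> [gY [rY [sY [pY [hY eY]]]]] [gZ [rZ [sZ [pZ [hZ eZ]]]]] x x0.
by rewrite (comp_radial pZ hY eY eZ x0) (comp_radial pY hZ eZ eY x0) mulrC.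
Qed.

Lemma N_normal (G Gi M : V -> V) : inG G -> eqP0 (Gi \o G) idfun ->
  eqP0 (G \o Gi) idfun -> inN M -> inN (G \o M \o Gi).
Proof.
move=> gG e1 e2 [gM [r [sr [pr [hr eM]]]]].
have [Z [[[mZ [sZ _]] hZ] [eZ1 eZ2]]] := inG_inv gG.
have hG : homog1 G by case: gG.
have GiZ : eqP0 Gi Z by exact: eqP0_inverse mZ eZ2 e1.
apply: (inN_eqP0 (Y' := fun x => (r \o Z) x *: x)).
  move=> x x0 /=; rewrite GiZ // eM ?mZ // hG ?mZ ?gt_eqF ?pr ?mZ //.
  by have /= -> := eZ2 x x0.
apply: inN_radial.
- exact: smooth_comp C1_differentiable_into_real open_punct open_punct mZ sr sZ.
- by move=> x x0 /=; apply: pr; exact: mZ.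
- by move=> x l x0 l0 /=; rewrite hZ // hr ?mZ.
Qed.

End CoordinateTransformations.

Section NormPreserving.
Context {R : realType} {n : nat}.
Local Notation V := 'rV[R]_n.
Variable nrm : V -> R.
Hypothesis nrm_norm : is_norm nrm.

Lemma nrmZ l x : nrm (l *: x) = `|l| * nrm x.
Proof. by case: nrm_norm => _ []. Qed.

Lemma nrm_gt0 x : x != 0 -> 0 < nrm x.
Proof.
move=> x0; have nrm0 : nrm 0 = 0 by rewrite -(scale0r 0) nrmZ normr0 mul0r.
have nrmN : nrm (- x) = nrm x by rewrite -scaleN1r nrmZ normrN1 mul1r.
have nrm_ge0 : 0 <= nrm x.
  by have := nrm_norm.2.2 x (- x); rewrite subrr nrm0 nrmN => ?; lra.
by rewrite lt_def nrm_ge0 andbT; apply: contra x0 => /eqP /nrm_norm.1 ->.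
Qed.

Lemma nrm_neq0 x : x != 0 -> nrm x != 0.
Proof. by move=> x0; rewrite gt_eqF ?nrm_gt0. Qed.

Lemma subgroup_H : subgroupG (inH nrm).
Proof.
split; first by move=> Y [].
split; first by split; [exact: subgroup_N.1 _ subgroup_N.2.1 | split].
split.
  move=> Y Z [gY [nY _]] [gZ [nZ _]].
  have [gYZ mZ] : inG (Y \o Z) /\ maps_punct Z by split; [exact: inG_comp | case: gZ => [[]]].
  split => //; split; first by move=> x x0 /=; rewrite nY ?mZ // nZ.
  by move=> x x0; apply: homog1N => //; case: gYZ.
move=> Y [gY [nY _]].
have [Yi [gYi [e1 e2]]] := inG_inv gY.
have mYi : maps_punct Yi by case: gYi => [[]].
exists Yi; split => //; split => //; split.
  by move=> x x0; have := nY (Yi x) (mYi x x0); have /= -> := e2 x x0.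
by move=> x x0; apply: homog1N => //; case: gYi.
Qed.

Lemma N_cap_H (Y : V -> V) : inN Y -> inH nrm Y -> eqP0 Y idfun.
Proof.
move=> [_ [r [_ [pr [_ eY]]]]] [_ [nY _]] x x0.
have := nY x x0; rewrite eY // nrmZ gtr0_norm ?pr // => E.
have -> : r x = 1 by apply: (mulIf (nrm_neq0 x0)); rewrite mul1r.
by rewrite scale1r.
Qed.

Hypothesis nrm_smooth : smooth_on (@punct R n) nrm.

Lemma G_eq_NH (Y : V -> V) : inG Y ->
  exists M K, inN M /\ inH nrm K /\ eqP0 Y (M \o K).
Proof.
move=> gY; have mY : maps_punct Y by case: gY => [[]].
have [Yi [[[mYi [sYi _]] hYi] [e1 e2]]] := inG_inv gY.
pose s y := nrm y / nrm (Yi y).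
have s_gt0 y : y != 0 -> 0 < s y by move=> y0; rewrite divr_gt0 ?nrm_gt0 ?mYi.
have s_neq0 y : y != 0 -> s y != 0 by move=> y0; rewrite gt_eqF ?s_gt0.
have sZ y l : y != 0 -> l != 0 -> s (l *: y) = s y.
  move=> y0 l0; rewrite /s hYi // !nrmZ.
  have a0 : `|l| != 0 by rewrite normr_eq0.
  have b0 := nrm_neq0 (mYi y y0).
  by field; rewrite a0 b0.
have s_smooth : smooth_on (@punct R n) s.
  apply: (smoothZ open_punct nrm_smooth); apply: (smoothV open_punct).
    by move=> y y0; exact: nrm_neq0 (mYi y y0).
  exact: smooth_comp C1_differentiable_into_real open_punct open_punct mYi nrm_smooth sYi.
have [inN_M inN_Mi] : inN (fun y => s y *: y) /\ inN (fun y => (s y)^-1 *: y).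
  split; apply: inN_radial => //.
  - by apply: (smoothV open_punct).
  - by move=> y y0; rewrite invr_gt0 s_gt0.
  - by move=> y l y0 l0; rewrite sZ.
pose K := (fun y => (s y)^-1 *: y) \o Y.
have gK : inG K by apply: inG_comp => //; case: inN_Mi.
exists (fun y => s y *: y), K; split => //; split.
  split => //; split; last by move=> x x0; apply: homog1N => //; case: gK.
  move=> x x0 /=; rewrite nrmZ ger0_norm; last by rewrite invr_ge0 ltW ?s_gt0 ?mY.
  rewrite /s; have /= -> := e1 x x0.
  have a0 := nrm_neq0 (mY x x0); have b0 := nrm_neq0 x0.
  by field; rewrite a0 b0.
move=> x x0 /=; have sY0 := s_neq0 _ (mY x x0).
by rewrite sZ ?invr_eq0 ?mY // scalerA mulfV // scale1r.
Qed.

End NormPreserving.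

Unset Implicit Arguments.
Theorem theorem2 (R : realType) (n : nat) (hn : (0 < n)%N)
  (nrm : 'rV[R]_n -> R) (hnorm : is_norm nrm)
  (hsmooth : smooth_on (@punct R n) nrm) :
  (* N^n is an abelian normal subgroup of G^n *)
  subgroupG (@inN R n) /\
  (forall Y Z : ('rV[R]_n -> 'rV[R]_n), inN Y -> inN Z -> eqP0 (Y \o Z) (Z \o Y)) /\
  (forall G Gi M : ('rV[R]_n -> 'rV[R]_n), inG G -> eqP0 (Gi \o G) idfun -> eqP0 (G \o Gi) idfun ->
     inN M -> inN (G \o M \o Gi)) /\
  (* H^n is a subgroup of G^n *)
  subgroupG (inH nrm) /\
  (* N^n /\ H^n = {e} *)
  (forall Y : ('rV[R]_n -> 'rV[R]_n), inN Y -> inH nrm Y -> eqP0 Y idfun) /\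
  (* G^n = N^n H^n *)
  (forall Y : ('rV[R]_n -> 'rV[R]_n), inG Y -> exists M K, inN M /\ inH nrm K /\ eqP0 Y (M \o K)).
Proof.
split; first exact: subgroup_N.
split; first exact: N_commute.
split; first exact: N_normal.
split; first exact: subgroup_H.
split; first exact: N_cap_H.
exact: G_eq_NH.
Qed.
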